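(* Let $C = c_0c_1\dots c_{m-1}c_0$ and $D=(0)(1)\dots(n-1)(0)$ be reflexive digraph cycles with $D$ non-contractible. Let $\phi \in \mathrm{Hom}(C,D)$ and let $S$ be the vertex set of a subpath of $C$ all of whose edges are stationary under $\phi$, so that $\phi$ maps $S$ to a single vertex $d$ of $D$. Let $\phi'$ be the map that agrees with $\phi$ outside $S$ and maps every vertex of $S$ to $d+1$. If $\phi'$ is a homomorphism, then $\phi$ and $\phi'$ are adjacent in $\mathrm{Hom}(C,D)$ (i.e. $\phi \to \phi'$ or $\phi' \to \phi$).
   Context: A digraph is a binary relation $\to$ on a finite vertex set; $uv$ is an arc if $u\to v$; a loop is an arc $uu$; a digraph is reflexive if every vertex has a loop. A digraph cycle of length $m \geq 3$ is written $c_0c_1\dots c_{m-1}c_0$ (indices mod $m$), meaning its underlying graph is the cycle with edges $c_ic_{i+1}$; each edge may be a forward arc, a backward arc, or both. $D=(0)(1)\dots(n-1)(0)$ has as vertices the integers mod $n$, consecutive integers being adjacent. $D$ is non-contractible if it has length at least $4$ or is a directed $3$-cycle. A homomorphism $\phi:C\to D$ maps vertices so that $u\to v$ implies $\phi(u)\to\phi(v)$. $\mathrm{Hom}(C,D)$ is the digraph on homomorphisms $C \to D$ with $\phi\to\phi'$ iff for all $u \to v$ in $C$, $\phi(u)\to\phi'(v)$. Under $\phi$, an edge $c_ic_{i+1}$ is stationary if $\phi(c_i)=\phi(c_{i+1})$. *)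

From mathcomp Require Import all_boot.
Set Implicit Arguments. Unset Strict Implicit. Unset Printing Implicit Defensive.

(* A digraph on vertex set 'I_m, vertices labelled c_0,...,c_{m-1} by index,
   is a reflexive digraph cycle c_0 c_1 ... c_{m-1} c_0 (length m >= 3):
   every vertex has a loop, and for distinct vertices i, j there is an arc in
   at least one direction exactly when i, j are consecutive mod m. *)
Definition reflexive_cycle (m : nat) (e : rel 'I_m) : Prop :=
  3 <= m /\
  (forall i, e i i) /\
  (forall i j : 'I_m, i != j ->
     (e i j || e j i) = (j == ordS i) || (i == ordS j)).

Definition directed_3cycle (n : nat) (e : rel 'I_n) : Prop :=
  n = 3 /\
  ((forall i : 'I_n, e i (ordS i) && ~~ e (ordS i) i) \/
   (forall i : 'I_n, e (ordS i) i && ~~ e i (ordS i))).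

Definition non_contractible (n : nat) (e : rel 'I_n) : Prop :=
  4 <= n \/ directed_3cycle e.

Definition is_hom (m n : nat) (eC : rel 'I_m) (eD : rel 'I_n)
  (f : 'I_m -> 'I_n) : Prop :=
  forall u v, eC u v -> eD (f u) (f v).

Definition hom_arc (m n : nat) (eC : rel 'I_m) (eD : rel 'I_n)
  (f g : 'I_m -> 'I_n) : Prop :=
  forall u v, eC u v -> eD (f u) (g v).

Definition path_vertex (m : nat) (a : 'I_m) (j : nat) : 'I_m :=
  iter j (@ordS m) a.

Definition subpath_set (m : nat) (a : 'I_m) (k : nat) : {set 'I_m} :=
  [set x | [exists j : 'I_k.+1, x == path_vertex a j]].

Definition shift_on (m n : nat) (S : {set 'I_m}) (d : 'I_n)
  (phi : 'I_m -> 'I_n) : 'I_m -> 'I_n :=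
  fun x => if x \in S then ordS d else phi x.

(* Since d and d+1 are distinct consecutive vertices of the reflexive cycle D,
   there is an arc d -> d+1 or d+1 -> d.  In the first case phi -> phi': an
   arc u -> v of C with both ends in S goes to d -> d+1, and otherwise one of
   the homomorphisms phi, phi' already witnesses phi u -> phi' v, because phi
   and phi' agree on whichever end lies outside S. *)

From mathcomp Require Import all_boot.
From mathcomp Require Import zify.

Set Implicit Arguments.
Unset Strict Implicit.
Unset Printing Implicit Defensive.

Lemma ordS_neq (n : nat) (d : 'I_n) : 1 < n -> d != ordS d.
Proof.
move=> n_gt1; apply/eqP => /(congr1 val) /=.
have [lt_Sd_n | le_n_Sd] := ltnP d.+1 n; first by rewrite modn_small // => /n_Sn.
have -> : d.+1 = n by have := ltn_ord d; lia.
by rewrite modnn; lia.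
Qed.

Lemma reflexive_cycle_adj_ordS (n : nat) (e : rel 'I_n) (d : 'I_n) :
  reflexive_cycle e -> e d (ordS d) || e (ordS d) d.
Proof.
by case=> n_ge3 [_ adj]; rewrite adj ?eqxx // ordS_neq // ltnW.
Qed.

Lemma subpath_set_const (m : nat) (T : Type) (f : 'I_m -> T) (a : 'I_m) (k : nat) :
  (forall j, j < k -> f (path_vertex a j) = f (path_vertex a j.+1)) ->
  {in subpath_set a k, forall x, f x = f a}.
Proof.
move=> stationary x; rewrite inE => /existsP [j /eqP ->].
have : j <= k by rewrite -ltnS.
by elim: (nat_of_ord j) => [|i IHi] lt_ik //; rewrite -stationary // IHi // ltnW.
Qed.

Lemma shift_on_in (m n : nat) (S : {set 'I_m}) (d : 'I_n) (phi : 'I_m -> 'I_n) :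
  {in S, forall x, shift_on S d phi x = ordS d}.
Proof. by move=> x xS; rewrite /shift_on xS. Qed.

Lemma shift_on_out (m n : nat) (S : {set 'I_m}) (d : 'I_n) (phi : 'I_m -> 'I_n) x :
  x \notin S -> phi x = shift_on S d phi x.
Proof. by rewrite /shift_on => /negbTE ->. Qed.

Lemma hom_arc_agree_off (m n : nat) (eC : rel 'I_m) (eD : rel 'I_n) (S : {set 'I_m}) (d d' : 'I_n) (f g : 'I_m -> 'I_n) :
  is_hom eC eD f -> is_hom eC eD g ->
  {in S, forall x, f x = d} -> {in S, forall x, g x = d'} ->
  (forall x, x \notin S -> f x = g x) ->
  eD d d' -> hom_arc eC eD f g.
Proof.
move=> hom_f hom_g f_S g_S fg_off dd' u v uv.
have [vS | vNS] := boolP (v \in S); last by rewrite -fg_off //; apply: hom_f.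
have [uS | uNS] := boolP (u \in S); first by rewrite f_S // g_S.
by rewrite fg_off //; apply: hom_g.
Qed.

Theorem lemma2p1 (m n : nat) (eC : rel 'I_m) (eD : rel 'I_n)
  (phi : 'I_m -> 'I_n) (a : 'I_m) (k : nat) :
  reflexive_cycle eC -> reflexive_cycle eD -> non_contractible eD ->
  is_hom eC eD phi ->
  k < m ->
  (forall j, j < k -> phi (path_vertex a j) = phi (path_vertex a j.+1)) ->
  is_hom eC eD (shift_on (subpath_set a k) (phi a) phi) ->
  hom_arc eC eD phi (shift_on (subpath_set a k) (phi a) phi) \/
  hom_arc eC eD (shift_on (subpath_set a k) (phi a) phi) phi.
Proof.
move=> _ cycD _ hom_phi _ stationary hom_phi'.
have phi_S := subpath_set_const stationary.
have phi'_S := @shift_on_in _ _ (subpath_set a k) (phi a) phi.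
have off_S := @shift_on_out _ _ (subpath_set a k) (phi a) phi.
case/orP: (reflexive_cycle_adj_ordS (phi a) cycD) => adj; [left | right].
- exact: hom_arc_agree_off hom_phi hom_phi' phi_S phi'_S off_S adj.
- by apply: hom_arc_agree_off hom_phi' hom_phi phi'_S phi_S _ adj => x /off_S ->.
Qed.
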